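(* Let $\sigma$ be a simplex of dimension $n$ (i.e. $|\sigma|=n+1$) in a simplicial complex $K$ with vertex set $K_0$. Then the complex $\left(\bigcup_{v\in\sigma}K_{K_0\setminus\{v\}}\right)\cap\mathrm{St}(\sigma)$ has the homotopy type of the $n$-th suspension $\Sigma^n\,\mathrm{St}(\sigma,K_0\setminus\sigma)$ of the obstruction complex.
   Context: A simplicial complex is a collection of finite nonempty subsets of a fixed set closed under taking nonempty subsets; $K_0$ is the vertex set. For a set $B$, $K_B$ is the subcomplex of simplices contained in $B$. The star of $\sigma$ is $\mathrm{St}(\sigma):=\{\mu\in K\mid\sigma\cup\mu\in K\}$, and for a set $A$, $\mathrm{St}(\sigma,A):=\{\mu\subset A\mid 0<|\mu|<\infty,\ \mu\cup\sigma\in K\}=K_A\cap\mathrm{St}(\sigma)$, which may be empty. Suspension is unreduced, so that $\Sigma^n\emptyset\simeq S^{n-1}$ (with $S^{-1}=\emptyset$). Homotopy types are those of geometric realizations. *)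

From HB Require Import structures.
From mathcomp Require Import all_boot all_order all_algebra.
From mathcomp Require Import finmap.
From mathcomp Require Import all_classical all_reals all_analysis.
Set Implicit Arguments. Unset Strict Implicit. Unset Printing Implicit Defensive.
Import Order.TTheory GRing.Theory Num.Theory.
Import numFieldNormedType.Exports.
Local Open Scope classical_set_scope.
Local Open Scope ring_scope.
Local Open Scope fset_scope.

Definition simplicial_complex {V : choiceType} (K : set {fset V}) : Prop :=
  (forall s, K s -> s != fset0) /\
  (forall s t, K s -> t `<=` s -> t != fset0 -> K t).

Definition star {V : choiceType} (K : set {fset V}) (sigma : {fset V}) :
  set {fset V} := fun mu => K mu /\ K (mu `|` sigma).

(** [K_B] for B = K_0 \ {v} : simplices of K not containing v. *)
Definition full_sub_minus {V : choiceType} (K : set {fset V}) (v : V) :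
  set {fset V} := fun mu => K mu /\ v \notin mu.

Definition link_union_star {V : choiceType} (K : set {fset V})
  (sigma : {fset V}) : set {fset V} :=
  fun mu => (exists2 v, v \in sigma & full_sub_minus K v mu) /\ star K sigma mu.

(** The obstruction complex St(sigma, K_0 \ sigma) = K_{K_0\sigma} \cap St(sigma). *)
Definition obstruction {V : choiceType} (K : set {fset V}) (sigma : {fset V}) :
  set {fset V} := fun mu => (K mu /\ [disjoint mu & sigma]) /\ star K sigma mu.

(** Iterated (unreduced) simplicial suspension: the join
    L * S^0 * ... * S^0 (n copies of the two-point complex S^0),
    on vertex type V + ('I_n * bool). *)
Definition getl {V : choiceType} {n : nat} (y : V + ('I_n * bool)) : option V :=
  if y is inl v then Some v else None.

Definition ltrace {V : choiceType} {n : nat} (tau : {fset V + ('I_n * bool)}) :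
  {fset V} := [fset x | x in pmap getl (enum_fset tau)].

Definition suspension_n {V : choiceType} (n : nat) (L : set {fset V}) :
  set {fset V + ('I_n * bool)} :=
  fun tau => [/\ tau != fset0,
    ltrace tau = fset0 \/ L (ltrace tau) &
    forall i : 'I_n, ~ (inr (i, true) \in tau /\ inr (i, false) \in tau)].

Arguments suspension_n {V} n L _.

(** Geometric realization |K|: finitely supported barycentric coordinate
    functions whose support lies in a simplex of K, with the coherent (weak)
    topology: U is open iff U meets every closed simplex |s| in a set open
    for the Euclidean (max-norm) topology of |s|. *)
Definition is_point {R : realType} {V : choiceType} (K : set {fset V})
  (f : V -> R) : Prop :=
  exists s, [/\ K s, (forall v, v \notin s -> f v = 0),
                (forall v, 0 <= f v) & \sum_(v <- s) f v = 1].

Definition realization (R : realType) {V : choiceType} (K : set {fset V}) :=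
  {f : V -> R | is_point K f}.

HB.instance Definition _ (R : realType) (V : choiceType) (K : set {fset V}) :=
  gen_eqMixin (realization R K).
HB.instance Definition _ (R : realType) (V : choiceType) (K : set {fset V}) :=
  gen_choiceMixin (realization R K).

Definition supported_in {R : realType} {V : choiceType} {K : set {fset V}}
  (s : {fset V}) (p : realization R K) : Prop :=
  forall v, v \notin s -> proj1_sig p v = 0.

Definition realization_open {R : realType} {V : choiceType} (K : set {fset V})
  (U : set (realization R K)) : Prop :=
  forall s, K s -> forall p, U p -> supported_in s p ->
    exists2 e : R, 0 < e & forall q, supported_in s q ->
      (forall v, v \in s -> `|proj1_sig q v - proj1_sig p v| < e) -> U q.

Lemma realization_openT (R : realType) (V : choiceType) (K : set {fset V}) :
  @realization_open R V K setT.
Proof. by move=> s Ks p _ _; exists 1. Qed.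

Lemma realization_openI (R : realType) (V : choiceType) (K : set {fset V}) :
  setI_closed (@realization_open R V K).
Proof.
move=> A B oA oB s Ks p [Ap Bp] sp.
have [e1 e1p H1] := oA s Ks p Ap sp.
have [e2 e2p H2] := oB s Ks p Bp sp.
exists (Num.min e1 e2); first by rewrite lt_min e1p e2p.
move=> q sq d; split.
- by apply: H1 => // v vs; have := d v vs; rewrite lt_min => /andP[].
- by apply: H2 => // v vs; have := d v vs; rewrite lt_min => /andP[].
Qed.

Lemma realization_open_bigU (R : realType) (V : choiceType) (K : set {fset V})
  (I : Type) (f : I -> set (realization R K)) :
  (forall i, @realization_open R V K (f i)) -> @realization_open R V K (\bigcup_i f i).
Proof.
move=> ofi s Ks p [i _ fip] sp.
have [e ep H] := ofi i s Ks p fip sp.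
by exists e => // q sq d; exists i => //; apply: H.
Qed.

HB.instance Definition _ (R : realType) (V : choiceType) (K : set {fset V}) :=
  isOpenTopological.Build (realization R K) (@realization_openT R V K)
    (@realization_openI R V K) (@realization_open_bigU R V K).

Definition homotopic {R : realType} {X Y : topologicalType} (f g : X -> Y) : Prop :=
  exists H : (X * subspace [set t : R | 0 <= t <= 1])%type -> Y,
    [/\ continuous H, (forall x, H (x, 0) = f x) & (forall x, H (x, 1) = g x)].

Definition homotopy_equivalent (R : realType) (X Y : topologicalType) : Prop :=
  exists (f : X -> Y) (g : Y -> X),
    [/\ continuous f, continuous g,
        homotopic (R := R) (g \o f) idfun & homotopic (R := R) (f \o g) idfun].

(* Both complexes are joins with L = St(sigma, K_0 \ sigma).  A simplex of
   St(sigma) avoiding some vertex of sigma is a proper face of sigma joined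
   with a simplex of L, so the first complex is (boundary of sigma) * L; the
   n-fold suspension is (S^0 * ... * S^0) * L, the boundary of the
   n-dimensional cross-polytope joined with L.  The two are homeomorphic by
   an explicit map.  Label sigma = {a_0, ..., a_n}; a point f of the first
   complex goes to the point whose L-part is f off sigma and whose i-th S^0
   carries the positive and negative parts of x_i = f(a_{i+1}) - f(a_0), all
   divided by D = 1 - sum_sigma f + sum_i |x_i| to restore total mass 1.
   Conversely the differences y_i = h(i,+) - h(i,-) determine the sigma-part
   up to a common shift, which is fixed by making its minimum vanish (some
   vertex of sigma has weight 0).  On each closed simplex both maps are built
   from the coordinates by sums, products, absolute values, minima and
   division by a nonvanishing scale, hence are continuous; a homeomorphism is
   a homotopy equivalence. *)

From HB Require Import structures.
From mathcomp Require Import all_boot all_order all_algebra.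
From mathcomp Require Import finmap.
From mathcomp Require Import all_classical all_reals all_analysis.
From mathcomp Require Import ring lra.
Import numFieldNormedType.Exports.
Import Order.TTheory GRing.Theory Num.Theory.
Set Implicit Arguments. Unset Strict Implicit. Unset Printing Implicit Defensive.
Local Open Scope classical_set_scope.
Local Open Scope fset_scope.
Local Open Scope ring_scope.

Section SimplexContinuity.
Variables (R : realType) (V : choiceType) (s : {fset V}).

Definition supported (q : V -> R) := forall v, v \notin s -> q v = 0.

Definition scont (F : (V -> R) -> R) (p : V -> R) :=
  forall e : R, 0 < e -> exists2 d : R, 0 < d & forall q, supported q ->
    (forall v, v \in s -> `|q v - p v| < d) -> `|F q - F p| < e.

Lemma scont_cst c p : scont (fun _ => c) p.
Proof. by move=> e e0; exists 1 => // q _ _; rewrite subrr normr0. Qed.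

Lemma scont_coord v p : supported p -> scont (fun q => q v) p.
Proof.
move=> sp e e0; exists e => // q sq close.
have [/close //|vs] := boolP (v \in s).
by rewrite sq // sp // subrr normr0.
Qed.

Lemma scont2 F G p e : scont F p -> scont G p -> 0 < e ->
  exists2 d, 0 < d & forall q, supported q ->
    (forall v, v \in s -> `|q v - p v| < d) ->
    `|F q - F p| < e /\ `|G q - G p| < e.
Proof.
move=> cF cG e0; have [d1 d10 H1] := cF e e0; have [d2 d20 H2] := cG e e0.
exists (Num.min d1 d2) => [|q sq close]; first by rewrite lt_min d10 d20.
by split; [apply: H1 | apply: H2] => // v /close; rewrite lt_min => /andP[].
Qed.

Lemma scontN F p : scont F p -> scont (fun q => - F q) p.
Proof.
move=> cF e /cF[d d0 close]; exists d => // q sq.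
by rewrite -opprD normrN; apply: close.
Qed.

Lemma scontD F G p : scont F p -> scont G p -> scont (fun q => F q + G q) p.
Proof.
move=> cF cG e e0; have [d d0 close] := scont2 cF cG (divr_gt0 e0 (ltr0n _ 2)).
exists d => // q sq /(close q sq)[hF hG].
rewrite opprD addrACA; apply: le_lt_trans (ler_normD _ _) _.
by rewrite [e]splitr ltrD.
Qed.

Lemma scont_norm F p : scont F p -> scont (fun q => `|F q|) p.
Proof.
move=> cF e /cF[d d0 close]; exists d => // q sq /(close q sq) dF.
exact: le_lt_trans (ler_dist_dist _ _) dF.
Qed.

Lemma scontM F G p : scont F p -> scont G p -> scont (fun q => F q * G q) p.
Proof.
move=> cF cG e e0.
set A := `|F p|; set B := `|G p|.
have A0 : 0 <= A := normr_ge0 _; have B0 : 0 <= B := normr_ge0 _.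
have AB1 : 0 < A + B + 1 by lra.
set eta := Num.min 1 (e / (A + B + 1)).
have eta0 : 0 < eta by rewrite lt_min ltr01 divr_gt0.
have eta1 : eta <= 1 by rewrite ge_min lexx.
have etae : eta * (A + B + 1) <= e by rewrite -ler_pdivlMr // ge_min lexx orbT.
have [d d0 close] := scont2 cF cG eta0.
exists d => // q sq /(close q sq)[hF hG].
have -> : F q * G q - F p * G p =
  (F q - F p) * (G q - G p) + F p * (G q - G p) + (F q - F p) * G p by ring.
apply: le_lt_trans (ler_normD _ _) _; rewrite !normrM.
apply: le_lt_trans (lerD (ler_normD _ _) (lexx _)) _; rewrite !normrM -/A -/B.
have := normr_ge0 (F q - F p); have := normr_ge0 (G q - G p).
nra.
Qed.

Lemma scontV F p : scont F p -> F p != 0 -> scont (fun q => (F q)^-1) p.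
Proof.
move=> cF Fp0 e e0.
set B := `|F p|; have B0 : 0 < B by rewrite normr_gt0.
set eta := Num.min (B / 2) (e * (B * B) / 2).
have eta0 : 0 < eta by rewrite lt_min !divr_gt0 ?mulr_gt0.
have etaB : eta <= B / 2 by rewrite ge_min lexx.
have etae : eta <= e * (B * B) / 2 by rewrite ge_min lexx orbT.
have [d d0 close] := cF _ eta0.
exists d => // q sq /(close q sq) dFq.
have FqB : B / 2 <= `|F q|.
  by have := lerB_dist (F p) (F q); rewrite distrC -/B; lra.
have Fq0 : F q != 0 by rewrite -normr_gt0; lra.
have -> : (F q)^-1 - (F p)^-1 = (F p - F q) / (F q * F p) by field; rewrite Fq0 Fp0.
rewrite normrM normfV normrM distrC ltr_pdivrMr ?mulr_gt0 ?normr_gt0 // -/B.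
by nra.
Qed.

Lemma scont_sum (I : Type) (r : seq I) (F : I -> (V -> R) -> R) p :
  (forall i, scont (F i) p) -> scont (fun q => \sum_(i <- r) F i q) p.
Proof.
move=> cF; elim: r => [|i r IH]; first by under eq_fun do rewrite big_nil; exact: scont_cst.
by under eq_fun do rewrite big_cons; exact: scontD.
Qed.

Lemma scont_min F G p : scont F p -> scont G p ->
  scont (fun q => Num.min (F q) (G q)) p.
Proof.
move=> cF cG e e0; have [d d0 close] := scont2 cF cG e0.
exists d => // q sq /(close q sq); rewrite !ltr_norml !minEle.
by case: (leP (F q) (G q)); case: (leP (F p) (G p)) => ? ? [] /andP[? ?] /andP[? ?];
  apply/andP; split; lra.
Qed.

Lemma scont_bigmin (I : Type) (r : seq I) (F : I -> (V -> R) -> R) c p :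
  (forall i, scont (F i) p) -> scont (fun q => \big[Num.min/c]_(i <- r) F i q) p.
Proof.
move=> cF; elim: r => [|i r IH]; first by under eq_fun do rewrite big_nil; exact: scont_cst.
by under eq_fun do rewrite big_cons; exact: scont_min.
Qed.

End SimplexContinuity.

Lemma common_pos_radius (R : realType) (T : eqType) (rs : seq T)
    (P : T -> R -> Prop) :
  (forall r e e', 0 < e' -> e' <= e -> P r e -> P r e') ->
  (forall r, r \in rs -> exists2 e, 0 < e & P r e) ->
  exists2 e, 0 < e & forall r, r \in rs -> P r e.
Proof.
move=> shrink; elim: rs => [|r rs IH] Prs; first by exists 1.
have [e1 e10 P1] := Prs r (mem_head _ _).
have [e2 e20 P2] : exists2 e, 0 < e & forall r, r \in rs -> P r e.
  by apply: IH => r' r'rs; apply: Prs; rewrite in_cons r'rs orbT.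
have e0 : 0 < Num.min e1 e2 by rewrite lt_min e10 e20.
exists (Num.min e1 e2) => // r'; rewrite in_cons => /predU1P[->|/P2].
  by apply: shrink P1; rewrite // ge_min lexx.
by apply: shrink; rewrite // ge_min lexx orbT.
Qed.

Section RealizationMaps.
Variables (R : realType) (V W : choiceType) (K : set {fset V}) (L : set {fset W}).
Hypothesis scL : simplicial_complex L.

Lemma realization_support (y : realization R L) (t : {fset W}) :
  supported t (proj1_sig y) -> L [fset w in t | proj1_sig y w != 0].
Proof.
move=> yt; have [r [Lr yr _ y1]] := proj2_sig y.
apply: scL.2 Lr _ _.
  apply/fsubsetP => w; rewrite inE => /andP[_]; apply: contraNT => wr.
  by rewrite yr.
apply/eqP => S0; move/eqP: y1; rewrite big1_seq => [|w _].
  by rewrite eq_sym oner_eq0.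
have [wt|/yt //] := boolP (w \in t).
by apply/eqP; apply: contraT => yw; rewrite -(in_fset0 w) -S0 !inE wt.
Qed.

Lemma realization_open_uniform (U : set (realization R L)) y (t : {fset W}) :
  open U -> U y -> exists2 e : R, 0 < e & forall r, r `<=` t -> L r ->
    supported_in r y -> forall z, supported_in r z ->
    (forall w, w \in r -> `|proj1_sig z w - proj1_sig y w| < e) -> U z.
Proof.
move=> oU Uy.
have [e e0 Ue] : exists2 e : R, 0 < e & forall r, r \in enum_fset (fpowerset t) ->
    L r -> supported_in r y -> forall z, supported_in r z ->
    (forall w, w \in r -> `|proj1_sig z w - proj1_sig y w| < e) -> U z.
  apply: common_pos_radius => [r e e' _ e'e Ue Lr yr z zr close|r _].
    by apply: Ue => // w /close /lt_le_trans; apply.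
  have [[Lr yr]|nLy] := pselect (L r /\ supported_in r y).
    by have [e e0 Ue] := oU r Lr y Uy yr; exists e.
  by exists 1 => // Lr yr; case: nLy.
by exists e => // r rt; apply: Ue; rewrite fpowersetE.
Qed.

Lemma realization_continuous (F : realization R K -> realization R L)
    (Phi : (V -> R) -> W -> R) :
  (forall p, proj1_sig (F p) = Phi (proj1_sig p)) ->
  (forall s, K s -> exists t : {fset W},
     (forall q, supported s q -> supported t (Phi q)) /\
     (forall p : realization R K, supported s (proj1_sig p) ->
        forall w, w \in t -> scont s (Phi^~ w) (proj1_sig p))) ->
  continuous F.
Proof.
move=> FE Fsupp; apply/continuousP => U oU.
change (@realization_open R V K (F @^-1` U)) => s Ks p Up sp.
have [t [tsupp tcont]] := Fsupp s Ks.
have [eps eps0 Ueps] := realization_open_uniform t oU Up.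
set Pp := Phi (proj1_sig p).
have [eta eta0 etaP] : exists2 eta : R, 0 < eta &
    forall w, w \in enum_fset t -> Pp w != 0 -> eta <= `|Pp w|.
  apply: common_pos_radius => [w e e' _ e'e etaP /etaP|w _]; first exact: le_trans.
  have [->|Pw0] := eqVneq (Pp w) 0; first by exists 1.
  by exists `|Pp w|; rewrite ?normr_gt0.
have [d d0 close] : exists2 d : R, 0 < d & forall w, w \in enum_fset t ->
    forall q, supported s q -> (forall v, v \in s -> `|q v - proj1_sig p v| < d) ->
    `|Phi q w - Pp w| < Num.min eps eta.
  apply: common_pos_radius => [w d d' _ d'd close q sq qp|w wt].
    by apply: close => // v /qp /lt_le_trans; apply.
  by apply: tcont => //; rewrite lt_min eps0 eta0.
exists d => // q sq qp.
have {}close w : w \in t -> `|Phi (proj1_sig q) w - Pp w| < Num.min eps eta.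
  by move=> wt; apply: close.
(* Close to p, the support of F q contains that of F p: both lie in the simplex r. *)
set r := [fset w in t | Phi (proj1_sig q) w != 0].
have Fq_r : supported_in r (F q).
  move=> w; rewrite !inE FE negb_and negbK => /orP[/(tsupp _ sq) //|/eqP //].
have Fp_r : supported_in r (F p).
  move=> w; rewrite FE -/Pp; have [wt|/(tsupp _ sp) //] := boolP (w \in t).
  rewrite !inE wt /= negbK => /eqP Pq0; apply: contraTeq (close w wt) => Pw0.
  by rewrite Pq0 sub0r normrN lt_min negb_and -!leNgt etaP ?orbT.
have rt : r `<=` t by apply/fsubsetP => w; rewrite inE => /andP[].
apply: (Ueps r) => // [|w /(fsubsetP rt) wt].
  by have := realization_support (y := F q) (t := t); rewrite FE; apply; apply: tsupp.
by rewrite !FE; have := close w wt; rewrite lt_min => /andP[].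
Qed.

End RealizationMaps.

Lemma homotopic_idfun (R : realType) (X : topologicalType) (f : X -> X) :
  f =1 idfun -> homotopic (R := R) f idfun.
Proof.
move=> fid; exists fst; split => [[x t]|x|//]; first exact: cvg_fst.
by rewrite fid.
Qed.

Lemma homotopy_equivalent_homeomorphism (R : realType) (X Y : topologicalType)
    (f : X -> Y) (g : Y -> X) :
  continuous f -> continuous g -> cancel f g -> cancel g f ->
  homotopy_equivalent R X Y.
Proof.
by move=> cf cg fK gK; exists f, g; split => //; apply: homotopic_idfun.
Qed.

Lemma is_point_ge0 (R : realType) (V : choiceType) (K : set {fset V}) (f : V -> R) :
  is_point K f -> forall v, 0 <= f v.
Proof. by case=> s []. Qed.

Lemma sum_uniq_support (R : realType) (T : eqType) (s1 s2 : seq T) (f : T -> R) :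
  uniq s1 -> uniq s2 -> (forall w, w \in s1 -> w \notin s2 -> f w = 0) ->
  (forall w, w \in s2 -> w \notin s1 -> f w = 0) ->
  \sum_(w <- s1) f w = \sum_(w <- s2) f w.
Proof.
have restrict (s s' : seq T) : (forall w, w \in s -> w \notin s' -> f w = 0) ->
    \sum_(w <- s) f w = \sum_(w <- [seq w <- s | w \in s']) f w.
  move=> f0; rewrite (bigID (mem s')) /= [X in _ + X]big1_seq ?addr0 ?big_filter //.
  by move=> w /andP[ws' /f0]; apply.
move=> u1 u2 f12 f21; rewrite (restrict _ s2) // (restrict s2 s1) //.
apply: perm_big; apply: uniq_perm; rewrite ?filter_uniq // => w.
by rewrite !mem_filter andbC.
Qed.

Lemma is_point_support (R : realType) (W : choiceType) (L : set {fset W})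
    (g : W -> R) (s : seq W) :
  uniq s -> (forall w, w \notin s -> g w = 0) -> (forall w, 0 <= g w) ->
  \sum_(w <- s) g w = 1 ->
  ([fset w in s | g w != 0] != fset0 -> L [fset w in s | g w != 0]) ->
  is_point L g.
Proof.
set tau := [fset w in s | g w != 0] => us gs g0 g1 Ltau.
have tau0 w : w \notin tau -> g w = 0.
  by rewrite !inE negb_and negbK => /orP[/gs|/eqP].
have sum_tau : \sum_(w <- tau) g w = 1.
  rewrite -g1; apply: sum_uniq_support; rewrite ?fset_uniq // => w _.
    by move/gs.
  by move/tau0.
exists tau; split => //; apply: Ltau; apply/eqP => tau_0.
by move: sum_tau; rewrite tau_0 big_seq_fset0 => /eqP; rewrite eq_sym oner_eq0.
Qed.

Lemma mem_ltrace (V : choiceType) n (tau : {fset V + ('I_n * bool)}) v :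
  (v \in ltrace tau) = (inl v \in tau).
Proof.
apply/imfsetP/idP => [[y]|vt]; last by exists v; rewrite // mem_pmap (map_f getl vt).
by rewrite /= mem_pmap => /mapP[[u|//] ut [->]] ->.
Qed.

Section Faces.
Variables (V : choiceType) (K : set {fset V}) (sigma : {fset V}).
Hypothesis scK : simplicial_complex K.

Lemma star_face mu nu : star K sigma mu -> nu `<=` mu -> nu != fset0 ->
  star K sigma nu.
Proof.
move=> [Kmu Kmus] numu nu0; split; first exact: scK.2 Kmu numu nu0.
apply: scK.2 Kmus (fsetSU _ numu) _.
by apply: contraNneq nu0 => /eqP; rewrite fsetU_eq0 => /andP[/eqP -> _].
Qed.

Lemma simplicial_complex_obstruction : simplicial_complex (obstruction K sigma).
Proof.
split=> [mu [[/scK.1]]|mu nu [[_ dis] st] numu nu0] //.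
split; last exact: star_face st numu nu0.
split; first exact: scK.2 st.1 numu nu0.
by apply/fdisjointP => v /(fsubsetP numu); apply: (fdisjointP dis).
Qed.

Lemma simplicial_complex_link_union_star :
  simplicial_complex (link_union_star K sigma).
Proof.
split=> [mu [[v _ [/scK.1]]]|mu nu [[v vs [_ vmu]] st] numu nu0] //.
split; last exact: star_face st numu nu0.
exists v => //; split; first exact: scK.2 st.1 numu nu0.
by apply: contra vmu; apply: (fsubsetP numu).
Qed.

End Faces.

Lemma simplicial_complex_suspension (V : choiceType) n (L : set {fset V}) :
  simplicial_complex L -> simplicial_complex (suspension_n n L).
Proof.
move=> scL; split=> [tau [] //|tau nu [_ Ltau tau2] nutau nu0]; split => //.
- have sub : ltrace nu `<=` ltrace tau.
    by apply/fsubsetP => v; rewrite !mem_ltrace; apply: (fsubsetP nutau).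
  have [|nu_l] := eqVneq (ltrace nu) fset0; [by left | right].
  case: Ltau => [tau_l|]; last by move/scL.2; apply.
  by move: sub nu_l; rewrite tau_l fsubset0 => ->.
- by move=> i [/(fsubsetP nutau) ? /(fsubsetP nutau) ?]; apply: (tau2 i).
Qed.

Definition pos_part (R : realType) (x : R) := (x + `|x|) / 2.

Section PosPart.
Variable R : realType.
Implicit Types x : R.

Lemma pos_part_ge0 x : 0 <= pos_part x.
Proof. by rewrite divr_ge0 //; have := ler_norm (- x); rewrite normrN; lra. Qed.

Lemma pos_part_id x : 0 <= x -> pos_part x = x.
Proof. by move=> x0; rewrite /pos_part ger0_norm //; field. Qed.

Lemma pos_part_eq0 x : x <= 0 -> pos_part x = 0.
Proof. by move=> x0; rewrite /pos_part ler0_norm // subrr mul0r. Qed.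

Lemma pos_part_pair x : pos_part x = 0 \/ pos_part (- x) = 0.
Proof.
have [x0|x0] := lerP x 0; first by left; apply: pos_part_eq0.
by right; apply: pos_part_eq0; rewrite oppr_le0 ltW.
Qed.

Lemma pos_part_subr x y : 0 <= x -> 0 <= y -> x = 0 \/ y = 0 -> pos_part (x - y) = x.
Proof.
move=> x0 y0 [->|->]; last by rewrite subr0 pos_part_id.
by rewrite sub0r pos_part_eq0 // oppr_le0.
Qed.

Lemma pos_partB x : pos_part x - pos_part (- x) = x.
Proof. by rewrite /pos_part normrN; field. Qed.

Lemma pos_partD x : pos_part x + pos_part (- x) = `|x|.
Proof. by rewrite /pos_part normrN; field. Qed.

Lemma pos_partZ x d : 0 < d -> pos_part (x / d) = pos_part x / d.
Proof.
by move=> d0; rewrite /pos_part normrM normfV (gtr0_norm d0); field; rewrite gt_eqF.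
Qed.

Lemma scont_pos_part (V : choiceType) (s : {fset V}) (F : (V -> R) -> R) p :
  scont s F p -> scont s (fun q => pos_part (F q)) p.
Proof. by move=> cF; apply: scontM (scont_cst _ _ _); apply: scontD (scont_norm _). Qed.

End PosPart.

Section JoinSeq.
Variables (V : choiceType) (n : nat).

Definition join_seq (r : seq V) : seq (V + ('I_n * bool)) :=
  map inl r ++ map inr (enum {: 'I_n * bool}).

Lemma join_seq_uniq r : uniq r -> uniq (join_seq r).
Proof.
move=> ur; have inl_inj : injective (@inl V ('I_n * bool)) by move=> ? ? [].
have inr_inj : injective (@inr V ('I_n * bool)) by move=> ? ? [].
rewrite cat_uniq (map_inj_uniq inl_inj) (map_inj_uniq inr_inj) ur enum_uniq andbT /=.
by apply/hasPn => _ /mapP[w _ ->]; apply/mapP => -[].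
Qed.

Lemma mem_join_seq_inl r v : (inl v \in join_seq r) = (v \in r).
Proof.
apply/idP/idP => [|vr]; last by rewrite mem_cat map_f.
by rewrite mem_cat => /orP[/mapP[u ur [->]]|/mapP[]].
Qed.

Lemma mem_join_seq_inr r p : inr p \in join_seq r.
Proof. by rewrite mem_cat (map_f inr) ?mem_enum ?orbT. Qed.

Lemma sum_join_seq (R : realType) r (F : V + ('I_n * bool) -> R) :
  \sum_(w <- join_seq r) F w =
  \sum_(v <- r) F (inl v) + \sum_(i < n) (F (inr (i, true)) + F (inr (i, false))).
Proof.
rewrite big_cat !big_map -enumT big_enum /=; congr (_ + _).
transitivity (\sum_(i < n) \sum_(b : bool) F (inr (i, b))).
  by rewrite pair_big; apply: eq_bigr => -[].
by apply: eq_bigr => i _; rewrite big_bool.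
Qed.

End JoinSeq.

Lemma sum_outside (R : realType) (V : choiceType) (sigma mu : {fset V})
    (f : V -> R) :
  (forall v, v \notin mu -> f v = 0) ->
  \sum_(v <- mu) (if v \in sigma then 0 else f v) =
  \sum_(v <- mu) f v - \sum_(v <- sigma) f v.
Proof.
move=> f0.
have -> : \sum_(v <- sigma) f v = \sum_(v <- mu) (if v \in sigma then f v else 0).
  transitivity (\sum_(v <- sigma) (if v \in sigma then f v else 0)).
    by apply: eq_big_seq => v ->.
  apply: sum_uniq_support; rewrite ?fset_uniq // => v; last by move=> _ /negbTE ->.
  by move=> _ /f0 ->; rewrite if_same.
by rewrite -sumrB; apply: eq_bigr => v _; case: ifP; rewrite ?subrr ?subr0.
Qed.

Section JoinHomeomorphism.
Variables (R : realType) (V : choiceType) (K : set {fset V}) (sigma : {fset V}).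
Variables (n : nat) (x0 : V).
Hypotheses (scK : simplicial_complex K) (Ksigma : K sigma).
Hypothesis card_sigma : #|` sigma| = n.+1.

Local Notation LUS := (link_union_star K sigma).
Local Notation SUSP := (suspension_n n (obstruction K sigma)).

Definition vtx (j : 'I_n.+1) : V := nth x0 sigma j.
Definition vidx (v : V) : 'I_n.+1 := inord (index v sigma).

Lemma size_sigma : size sigma = n.+1. Proof. by rewrite -card_sigma. Qed.

Lemma vtx_mem j : vtx j \in sigma.
Proof. by rewrite mem_nth // size_sigma. Qed.

Lemma vtxK : cancel vtx vidx.
Proof.
by move=> j; rewrite /vidx /vtx index_uniq ?fset_uniq ?size_sigma // inord_val.
Qed.

Lemma vidxK v : v \in sigma -> vtx (vidx v) = v.
Proof.
by move=> vs; rewrite /vtx /vidx inordK ?nth_index // -size_sigma index_mem.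
Qed.

Lemma sum_sigma (F : V -> R) :
  \sum_(v <- sigma) F v = \sum_(j < n.+1) F (vtx j).
Proof. by rewrite (big_nth x0) size_sigma big_mkord. Qed.

Definition sdiff (f : V -> R) (j : 'I_n.+1) := f (vtx j) - f (vtx ord0).

Definition join_scale (f : V -> R) :=
  1 - \sum_(v <- sigma) f v + \sum_(i < n) `|sdiff f (lift ord0 i)|.

Definition to_susp (f : V -> R) (w : V + ('I_n * bool)) : R :=
  match w with
  | inl v => (if v \in sigma then 0 else f v) / join_scale f
  | inr (i, b) =>
    pos_part (if b then sdiff f (lift ord0 i) else - sdiff f (lift ord0 i)) /
      join_scale f
  end.

Definition pair_mass (h : V + ('I_n * bool) -> R) (i : 'I_n) :=
  h (inr (i, true)) + h (inr (i, false)).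

Definition zcoord (h : V + ('I_n * bool) -> R) (j : 'I_n.+1) :=
  if unlift ord0 j is Some i then h (inr (i, true)) - h (inr (i, false)) else 0.

Definition zmin h := \big[Num.min/0]_(j < n.+1) zcoord h j.

Definition sigma_coord h (v : V) := zcoord h (vidx v) - zmin h.

Definition susp_scale h :=
  1 - \sum_(i < n) pair_mass h i + \sum_(v <- sigma) sigma_coord h v.

Definition from_susp (h : V + ('I_n * bool) -> R) (v : V) : R :=
  (if v \in sigma then sigma_coord h v else h (inl v)) / susp_scale h.

Lemma zcoord0 h : zcoord h ord0 = 0.
Proof. by rewrite /zcoord unlift_none. Qed.

Lemma zcoord_lift h i : zcoord h (lift ord0 i) = h (inr (i, true)) - h (inr (i, false)).
Proof. by rewrite /zcoord liftK. Qed.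

Lemma zmin_le h j : zmin h <= zcoord h j.
Proof. exact: bigmin_le. Qed.

Lemma zmin_attained h : exists j, zcoord h j = zmin h.
Proof.
have [j _ jmin] := @arg_minP _ _ _ ord0 xpredT (zcoord h) isT.
exists j; apply/le_anti; rewrite zmin_le andbT.
by apply: le_bigmin => [|i _]; rewrite ?jmin // -(zcoord0 h) jmin.
Qed.

Lemma sigma_coord_ge0 h v : 0 <= sigma_coord h v.
Proof. by rewrite subr_ge0 zmin_le. Qed.

Lemma sigma_coord_vtx h j : sigma_coord h (vtx j) = zcoord h j - zmin h.
Proof. by rewrite /sigma_coord vtxK. Qed.

Lemma link_point_facts f mu : LUS mu -> (forall v, v \notin mu -> f v = 0) ->
  \sum_(v <- mu) f v = 1 ->
  (exists j, f (vtx j) = 0) /\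
  join_scale f = \sum_(v <- mu) (if v \in sigma then 0 else f v) +
                 \sum_(i < n) `|sdiff f (lift ord0 i)|.
Proof.
move=> [[v vs [_ vmu]] _] f0 f1; split; first by exists (vidx v); rewrite vidxK // f0.
by rewrite sum_outside // f1.
Qed.

Lemma join_scale_gt0 f : is_point LUS f -> 0 < join_scale f.
Proof.
move=> fP; have fge0 := is_point_ge0 fP; case: fP => mu [LUSmu f0 _ f1].
have [[j0 fj0] DE] := link_point_facts LUSmu f0 f1.
have out1 : \sum_(v <- mu) (if v \in sigma then 0 else f v) = 1 - \sum_(v <- sigma) f v.
  by rewrite sum_outside // f1.
have out_ge0 : 0 <= \sum_(v <- mu) (if v \in sigma then 0 else f v).
  by apply: sumr_ge0 => v _; case: ifP.
have dif_ge0 : 0 <= \sum_(i < n) `|sdiff f (lift ord0 i)| by apply: sumr_ge0.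
rewrite lt_def DE addr_ge0 // andbT paddr_eq0 //.
apply: contraPN out1 => /andP[/eqP-> /eqP dif0].
have sd0 j : sdiff f j = 0.
  have [i ->|->] := unliftP ord0 j; last by rewrite /sdiff subrr.
  by apply/eqP/normr0P; apply: (psumr_eq0P _ dif0).
have f00 : f (vtx ord0) = 0 by have := sd0 j0; rewrite /sdiff fj0; lra.
have fvtx j : f (vtx j) = 0 by have := sd0 j; rewrite /sdiff f00; lra.
by rewrite sum_sigma big1 // subr0 => /esym/eqP; rewrite oner_eq0.
Qed.

Lemma to_susp_point f : is_point LUS f -> is_point SUSP (to_susp f).
Proof.
move=> fP; have D0 := join_scale_gt0 fP; have fge0 := is_point_ge0 fP.
case: fP => mu [LUSmu f0 _ f1]; have [_ DE] := link_point_facts LUSmu f0 f1.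
have [[_ _ [Kmu _]] stmu] := LUSmu.
apply: (@is_point_support _ _ _ _ (join_seq n mu)).
- exact/join_seq_uniq/fset_uniq.
- case=> [v|p]; rewrite ?mem_join_seq_inr // mem_join_seq_inl => /f0 /= ->.
  by rewrite if_same mul0r.
- case=> [v|[i b]]; apply: divr_ge0; rewrite ?pos_part_ge0 ?(ltW D0) //=.
  by case: ifP.
- rewrite sum_join_seq /=.
  under [X in _ + X]eq_bigr do rewrite -mulrDl pos_partD.
  by rewrite -!mulr_suml -mulrDl -DE divff ?gt_eqF.
set tau := [fset w in _ | to_susp f w != 0] => tau0; split => //.
- have [|ltau0] := eqVneq (ltrace tau) fset0; [by left | right].
  have sub : ltrace tau `<=` mu `\` sigma.
    apply/fsubsetP => v; rewrite mem_ltrace !inE mem_join_seq_inl /=.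
    case: ifPn => [_|vs /andP[vmu _]]; first by rewrite mul0r eqxx andbF.
    by apply/andP; split.
  have diff0 : mu `\` sigma != fset0.
    by apply: contraNneq ltau0 => diff0; rewrite -fsubset0 -diff0.
  have obs : obstruction K sigma (mu `\` sigma).
    split; last by apply: (star_face scK stmu) diff0; apply: fsubsetDl.
    split; first exact: scK.2 Kmu (fsubsetDl _ _) diff0.
    by apply/fdisjointP => v; rewrite inE => /andP[].
  exact: (simplicial_complex_obstruction sigma scK).2 _ _ obs sub ltau0.
- move=> i []; rewrite !inE /= => /andP[_ +] /andP[_].
  by case: (pos_part_pair (sdiff f (lift ord0 i))) => ->; rewrite mul0r eqxx.
Qed.

Lemma susp_point_facts h : is_point SUSP h -> exists rho : {fset V},
  [/\ K (rho `|` sigma), [disjoint rho & sigma],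
      forall v, v \notin rho -> h (inl v) = 0,
      forall i, h (inr (i, true)) = 0 \/ h (inr (i, false)) = 0 &
      \sum_(v <- rho) h (inl v) + \sum_(i < n) pair_mass h i = 1].
Proof.
case=> tau [[_ Lrho tau2] h0 _ h1]; exists (ltrace tau); split.
- by case: Lrho => [->|[_ []]]; rewrite ?fset0U.
- by case: Lrho => [->|[[_]]] //; apply/fdisjointP => v; rewrite in_fset0.
- by move=> v; rewrite mem_ltrace => /h0.
- move=> i; have [tit|/h0] := boolP (inr (i, true) \in tau); last by left.
  have [tif|/h0] := boolP (inr (i, false) \in tau); last by right.
  by case: (tau2 i).
rewrite -h1 -sum_join_seq; apply: sum_uniq_support.
- exact/join_seq_uniq/fset_uniq.
- exact: fset_uniq.
- by move=> w _; apply: h0.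
- by case=> [v|p] wt; rewrite ?mem_join_seq_inr // mem_join_seq_inl mem_ltrace wt.
Qed.

Lemma pair_mass_norm h : is_point SUSP h ->
  forall i, pair_mass h i = `|zcoord h (lift ord0 i)|.
Proof.
move=> hP i; have [rho [_ _ _ hpair _]] := susp_point_facts hP.
have := is_point_ge0 hP (inr (i, true)); have := is_point_ge0 hP (inr (i, false)).
rewrite /pair_mass zcoord_lift; case: (hpair i) => -> ? ?.
  by rewrite add0r sub0r normrN ger0_norm.
by rewrite addr0 subr0 ger0_norm.
Qed.

Lemma susp_scaleE h (rho : {fset V}) :
  \sum_(v <- rho) h (inl v) + \sum_(i < n) pair_mass h i = 1 ->
  susp_scale h = \sum_(v <- rho) h (inl v) + \sum_(v <- sigma) sigma_coord h v.
Proof. by rewrite /susp_scale => <-; lra. Qed.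

Lemma susp_scale_gt0 h : is_point SUSP h -> 0 < susp_scale h.
Proof.
move=> hP; have [rho [_ _ _ _ h1]] := susp_point_facts hP.
have rho_ge0 : 0 <= \sum_(v <- rho) h (inl v).
  by apply: sumr_ge0 => v _; exact: (is_point_ge0 hP (inl v)).
have sig_ge0 : 0 <= \sum_(v <- sigma) sigma_coord h v.
  by apply: sumr_ge0 => v _; apply: sigma_coord_ge0.
rewrite (susp_scaleE h1) lt_def addr_ge0 // andbT paddr_eq0 //.
apply: contraPN h1 => /andP[/eqP-> /eqP]; rewrite sum_sigma => sig0.
have sig_vtx0 := psumr_eq0P (fun j _ => sigma_coord_ge0 h _) sig0 (i := _) isT.
have zmin0 : zmin h = 0.
  by have := sig_vtx0 ord0; rewrite sigma_coord_vtx zcoord0; lra.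
rewrite add0r big1 => [|i _]; first by apply/eqP; rewrite eq_sym oner_eq0.
have := sig_vtx0 (lift ord0 i).
by rewrite sigma_coord_vtx zmin0 subr0 pair_mass_norm // => ->; rewrite normr0.
Qed.

Lemma from_susp_point h : is_point SUSP h -> is_point LUS (from_susp h).
Proof.
move=> hP; have E0 := susp_scale_gt0 hP.
have [rho [Krho dis h0 _ h1]] := susp_point_facts hP.
apply: (@is_point_support _ _ _ _ (rho `|` sigma)).
- exact: fset_uniq.
- move=> v; rewrite in_fsetU negb_or => /andP[vrho /negbTE vs].
  by rewrite /from_susp vs h0 ?mul0r.
- move=> v; apply: divr_ge0 (ltW E0); case: ifP => _; first exact: sigma_coord_ge0.
  exact: (is_point_ge0 hP (inl v)).
- transitivity (\sum_(v <- rho ++ sigma) from_susp h v).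
    apply: sum_uniq_support => [||v|v]; rewrite ?fset_uniq //.
    + rewrite cat_uniq !fset_uniq andbT; apply/hasPn => v vs.
      exact: contraL (fdisjointP dis v) vs.
    + by rewrite mem_cat in_fsetU => ->.
    + by rewrite mem_cat in_fsetU => ->.
  rewrite big_cat /= /from_susp -!mulr_suml -mulrDl.
  rewrite [X in X / _](_ : _ = susp_scale h) ?divff ?gt_eqF // (susp_scaleE h1).
  congr (_ + _); apply: eq_big_seq => v; last by move=> ->.
  by move/(fdisjointP dis)/negbTE ->.
set tau := [fset v in _ | _] => tau0.
have tau_sub : tau `<=` rho `|` sigma.
  by apply/fsubsetP => v; rewrite /tau !inE => /andP[].
have Ktau : K tau := scK.2 _ _ Krho tau_sub tau0.
have [j0 zj0] := zmin_attained h.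
split; first exists (vtx j0); rewrite ?vtx_mem //.
  split => //; rewrite /tau !inE negb_and negbK /from_susp vtx_mem sigma_coord_vtx zj0.
  by rewrite subrr mul0r eqxx orbT.
split => //; apply: scK.2 Krho _ _; first by rewrite fsubUset tau_sub fsubsetUr.
by apply: contraNneq tau0 => /eqP; rewrite fsetU_eq0 => /andP[].
Qed.

Lemma zcoord_to_susp f j : zcoord (to_susp f) j = sdiff f j / join_scale f.
Proof.
have [i ->|->] := unliftP ord0 j; first by rewrite zcoord_lift /= -mulrBl pos_partB.
by rewrite zcoord0 /sdiff subrr mul0r.
Qed.

Lemma from_to_susp f : is_point LUS f -> from_susp (to_susp f) = f.
Proof.
move=> fP; have D0 := join_scale_gt0 fP; have fge0 := is_point_ge0 fP.
have [j0 fj0] : exists j, f (vtx j) = 0.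
  by case: fP => mu [LUSmu f0 _ f1]; case: (link_point_facts LUSmu f0 f1).
have zmin_to : zmin (to_susp f) = - f (vtx ord0) / join_scale f.
  apply/le_anti; apply/andP; split.
    by have := zmin_le (to_susp f) j0; rewrite zcoord_to_susp /sdiff fj0 sub0r.
  apply: le_bigmin => [|j _].
    by rewrite mulNr oppr_le0; apply: divr_ge0 (fge0 _) (ltW D0).
  by rewrite zcoord_to_susp ler_pM2r ?invr_gt0 // /sdiff; have := fge0 (vtx j); lra.
have sigma_to v : v \in sigma -> sigma_coord (to_susp f) v = f v / join_scale f.
  move=> vs; rewrite -(vidxK vs) sigma_coord_vtx zcoord_to_susp zmin_to /sdiff.
  by rewrite mulNr opprK -mulrDl subrK.
have scale_to : susp_scale (to_susp f) = (join_scale f)^-1.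
  rewrite /susp_scale (eq_big_seq _ sigma_to) -mulr_suml.
  under eq_bigr do rewrite /pair_mass /= -mulrDl pos_partD.
  by rewrite -mulr_suml /join_scale; field; rewrite -/(join_scale f) gt_eqF.
apply/funext => v; rewrite /from_susp scale_to invrK.
case: ifPn => vs; first by rewrite sigma_to // divfK ?gt_eqF.
by rewrite /= (negbTE vs) divfK ?gt_eqF.
Qed.

Lemma to_from_susp h : is_point SUSP h -> to_susp (from_susp h) = h.
Proof.
move=> hP; have E0 := susp_scale_gt0 hP; have hge0 := is_point_ge0 hP.
have [rho [_ dis h0 hpair _]] := susp_point_facts hP.
have sdiff_from j : sdiff (from_susp h) j = zcoord h j / susp_scale h.
  rewrite /sdiff /from_susp !vtx_mem !sigma_coord_vtx zcoord0 -mulrBl.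
  by congr (_ / _); lra.
have scale_from : join_scale (from_susp h) = (susp_scale h)^-1.
  rewrite /join_scale (eq_big_seq (fun v => sigma_coord h v / susp_scale h)); last first.
    by move=> v vs; rewrite /from_susp vs.
  under [\sum_(i < n) _]eq_bigr
    do rewrite sdiff_from normrM normfV (gtr0_norm E0) -pair_mass_norm //.
  by rewrite -!mulr_suml /susp_scale; field; rewrite -/(susp_scale h) gt_eqF.
apply/funext => -[v|[i b]]; rewrite /to_susp scale_from invrK.
  case: ifPn => vs; last by rewrite /from_susp (negbTE vs) divfK ?gt_eqF.
  by rewrite mul0r h0 //; apply: contraL vs; apply: (fdisjointP dis).
have ht := hge0 (inr (i, true)); have hf := hge0 (inr (i, false)).
rewrite sdiff_from zcoord_lift; case: b; rewrite -?mulNr pos_partZ // divfK ?gt_eqF //.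
  exact: pos_part_subr (hpair i).
by rewrite opprB; apply: pos_part_subr => //; case: (hpair i); [right | left].
Qed.

Lemma scont_sdiff s p j : supported s p -> scont s (sdiff^~ j) p.
Proof. by move=> sp; apply: scontD (scontN _); apply: scont_coord. Qed.

Lemma scont_join_scale s p : supported s p -> scont s join_scale p.
Proof.
move=> sp; apply: scontD; last by apply: scont_sum => i; apply/scont_norm/scont_sdiff.
by apply: scontD (scont_cst _ _ _) (scontN _); apply: scont_sum => v; apply: scont_coord.
Qed.

Lemma scont_zcoord s p j : supported s p -> scont s (zcoord^~ j) p.
Proof.
move=> sp; rewrite /zcoord; case: unlift => [i|]; last exact: scont_cst.
by apply: scontD (scontN _); apply: scont_coord.
Qed.

Lemma scont_sigma_coord s p v : supported s p -> scont s (sigma_coord^~ v) p.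
Proof.
move=> sp; apply: scontD (scont_zcoord _ sp) (scontN _).
by apply: scont_bigmin => j; apply: scont_zcoord.
Qed.

Lemma scont_susp_scale s p : supported s p -> scont s susp_scale p.
Proof.
move=> sp; apply: scontD; last by apply: scont_sum => v; apply: scont_sigma_coord.
apply: scontD (scont_cst _ _ _) (scontN _).
by apply: scont_sum => i; apply: scontD; apply: scont_coord.
Qed.

Definition to_susp_map (p : realization R LUS) : realization R SUSP :=
  exist _ (to_susp (proj1_sig p)) (to_susp_point (proj2_sig p)).

Definition from_susp_map (p : realization R SUSP) : realization R LUS :=
  exist _ (from_susp (proj1_sig p)) (from_susp_point (proj2_sig p)).

Lemma to_susp_mapK : cancel to_susp_map from_susp_map.
Proof. by case=> f fP; apply: eq_exist; rewrite /= from_to_susp. Qed.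

Lemma from_susp_mapK : cancel from_susp_map to_susp_map.
Proof. by case=> h hP; apply: eq_exist; rewrite /= to_from_susp. Qed.

Lemma to_susp_map_continuous : continuous to_susp_map.
Proof.
apply: (realization_continuous _ (Phi := to_susp)) => // [|s _].
  exact/simplicial_complex_suspension/simplicial_complex_obstruction.
exists [fset w in join_seq n s]; split => [q sq|p sp w _].
  case=> [v|w]; rewrite in_fset /= ?mem_join_seq_inr // mem_join_seq_inl => /sq ->.
  by rewrite if_same mul0r.
have D0 : join_scale (proj1_sig p) != 0.
  by rewrite gt_eqF // (join_scale_gt0 (proj2_sig p)).
case: w => [v|[i b]]; apply: scontM (scontV (scont_join_scale sp) D0).
  by case: (v \in sigma); [apply: scont_cst | apply: scont_coord].
by apply: scont_pos_part; case: b; [|apply: scontN]; apply: scont_sdiff.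
Qed.

Lemma from_susp_map_continuous : continuous from_susp_map.
Proof.
apply: (realization_continuous _ (Phi := from_susp)) => // [|s _].
  exact: simplicial_complex_link_union_star.
exists (ltrace s `|` sigma); split => [q sq v|p sp v _].
  rewrite in_fsetU negb_or mem_ltrace => /andP[/sq q0 /negbTE vs].
  by rewrite /from_susp vs q0 mul0r.
have E0 : susp_scale (proj1_sig p) != 0.
  by rewrite gt_eqF // (susp_scale_gt0 (proj2_sig p)).
apply: scontM (scontV (scont_susp_scale sp) E0).
by case: (v \in sigma); [apply: scont_sigma_coord | apply: scont_coord].
Qed.

End JoinHomeomorphism.

Theorem proposition6p1 (R : realType) (V : choiceType) (K : set {fset V})
  (sigma : {fset V}) (n : nat) :
  simplicial_complex K -> K sigma -> #|` sigma| = n.+1 ->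
  homotopy_equivalent R
    (realization R (link_union_star K sigma))
    (realization R (suspension_n n (obstruction K sigma))).
Proof.
move=> scK Ksigma card_sigma.
have [x0 _] : {x0 | x0 \in sigma}.
  by apply/sigW/fset0Pn; rewrite -cardfs_gt0 card_sigma.
apply: (@homotopy_equivalent_homeomorphism R _ _
  (to_susp_map x0 scK card_sigma) (from_susp_map x0 scK Ksigma card_sigma)).
- exact: to_susp_map_continuous.
- exact: from_susp_map_continuous.
- exact: to_susp_mapK.
- exact: from_susp_mapK.
Qed.
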